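(* Let $(X,d^X)$ be a compact metric space, $f$ a homeomorphism of $X$ and $\mu$ a Borel measure on $X$ with $\mu(X)>0$. Then: (i) if $\mu$ is topologically stable with respect to $f$, then $Ts^\mu_f(X)=X$; (ii) for every compact metric space $(Y,d^Y)$ and every homeomorphism $h:X\to Y$, $Ts^{h^*(\mu)}_{h\circ f\circ h^{-1}}(Y)=h(Ts^\mu_f(X))$ and $Sts^{h^*(\mu)}_{h\circ f\circ h^{-1}}(Y)=h(Sts^\mu_f(X))$, where $h^*(\mu)(A)=\mu(h^{-1}(A))$; (iii) if $\mu$ is non-atomic and $x$ is a topologically stable point of $f$, then $x$ is a strong $\mu$-topologically stable point of $f$.
   Context: $B(x,\epsilon)$ and $B[x,\epsilon]$ are the open and closed balls; $\mathcal{O}_g(x)=\{g^n(x):n\in\mathbb{Z}\}$; $d_{C^0}(f,g)=\sup_x d(f(x),g(x))$. For $Z\subset X$, a set-valued map $H:Z\to 2^X$ has domain $Dom(H)=\{z\in Z:H(z)\ne\emptyset\}$; it is compact valued if each $H(z)$ is compact; $d(H,Id)\le\epsilon$ means $H(z)\subset B[z,\epsilon]$ for all $z\in Z$; $H$ is upper semi-continuous if for each $z\in Dom(H)$ and each open $O\supset H(z)$ there is $\gamma>0$ with $H(w)\subset O$ for all $w\in Z$ with $d(w,z)<\gamma$; $f\circ H=H\circ g$ means $f(H(z))=H(g(z))$ for all $z$. $\mu$ is non-atomic if $\mu(\{x\})=0$ for all $x$. $\mu$ is topologically stable w.r.t. $f$ if for every $\epsilon>0$ there is $\delta>0$ such that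 for every homeomorphism $g$ with $d_{C^0}(f,g)\le\delta$ there is an upper semi-continuous compact valued $H:X\to 2^X$ with measurable domain such that $\mu(X\setminus Dom(H))=0$, $\mu(H(x))=0$ for all $x$, $d(H,Id)\le\epsilon$ and $f\circ H=H\circ g$. A point $x$ is a $\mu$-topologically stable point of $f$ if for every $\epsilon>0$ there is $\delta>0$ such that for every homeomorphism $g$ of $X$ with $d_{C^0}(f,g)\le\delta$ there is an upper semi-continuous compact valued $H:\overline{\mathcal{O}_g(x)}\to 2^X$ with measurable domain such that (i) $\mu(H(z))=0$ for each $z\in B(x,\delta/4)\cap\overline{\mathcal{O}_g(x)}$, (ii) $d(H,Id)\le\epsilon$, (iii) $f\circ H=H\circ g$. $x$ is a strong $\mu$-topologically stable point if moreover (for the given $\epsilon$, together with $\delta$) there is a Borel set $B\subset X$ with $\mu(X\setminus B)=0$ such that additionally (iv) $\mu(X\setminus Dom(H))\le\mu(X\setminus U)$, where $U=B\cap B(x,\delta)\cap\overline{\mathcal{O}_g(x)}$. $Ts^\mu_f(X)$ and $Sts^\mu_f(X)$ denote the sets of $\mu$-topologically stable and strong $\mu$-topologically stable points. $x$ is a topologically stable point of $f$ if for every $\epsilon>0$ there is $\delta>0$ such that for every homeomorphism $g$ with $d_{C^0}(f,g)\le\delta$ there is a continuous $h:\overline{\mathcal{O}_g(x)}\to X$ with $f\circ h=h\circ g$ and $d(h(z),z)\le\epsilon$ for all $z\in\overline{\mathcal{O}_g(x)}$. *)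

From HB Require Import structures.
From mathcomp Require Import all_boot all_order all_algebra.
From mathcomp Require Import all_classical all_reals all_analysis.
Set Implicit Arguments. Unset Strict Implicit. Unset Printing Implicit Defensive.
Import Order.TTheory GRing.Theory Num.Theory.
Import numFieldNormedType.Exports.
Local Open Scope classical_set_scope.
Local Open Scope ring_scope.

Section Defs.
Context {R : realType} {X : metricType R}.

Local Notation dist := (@mdist R X).

Definition oball (x : X) (e : R) : set X := [set y | dist x y < e].
Definition cball (x : X) (e : R) : set X := [set y | dist x y <= e].

Definition borel (A : set X) : Prop := <<s @open X >> A.

(* mu is a Borel measure on X: a (positive, countably additive) measure on
   the Borel sigma-algebra <<s open >> (values outside Borel sets are
   irrelevant and never used) *)
Definition borel_measure (mu : set X -> \bar R) : Prop :=
  [/\ mu set0 = 0%E,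
      (forall A, borel A -> (0 <= mu A)%E) &
      (forall F : nat -> set X, (forall i, borel (F i)) -> trivIset setT F ->
         (fun n => \sum_(0 <= i < n) mu (F i))%E @ \oo --> mu (\bigcup_n F n))].

Definition homeo (f : X -> X) : Prop :=
  continuous f /\ exists g : X -> X, [/\ cancel f g, cancel g f & continuous g].

Definition dC0_le (f g : X -> X) (delta : R) : Prop :=
  forall x, dist (f x) (g x) <= delta.

(* the full orbit O_g(x) = {g^n(x) : n in Z} of a bijection g:
   y = g^n(x) (n >= 0) or x = g^n(y), i.e. y = g^(-n)(x) *)
Definition orbit (g : X -> X) (x : X) : set X :=
  [set y | exists n : nat, y = iter n g x \/ x = iter n g y].

(* set-valued maps H : Z -> 2^X, represented by H : X -> set X restricted to Z *)
Definition Dom (Z : set X) (H : X -> set X) : set X :=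
  [set z | Z z /\ H z !=set0].

Definition compact_valued (Z : set X) (H : X -> set X) : Prop :=
  forall z, Z z -> compact (H z).

Definition usc (Z : set X) (H : X -> set X) : Prop :=
  forall z, Dom Z H z -> forall O : set X, open O -> H z `<=` O ->
    exists2 gam : R, 0 < gam & forall w, Z w -> dist w z < gam -> H w `<=` O.

Definition dist_Id_le (Z : set X) (H : X -> set X) (eps : R) : Prop :=
  forall z, Z z -> H z `<=` cball z eps.

Definition semiconj (Z : set X) (f g : X -> X) (H : X -> set X) : Prop :=
  forall z, Z z -> f @` H z = H (g z).

Definition top_stable_measure (f : X -> X) (mu : set X -> \bar R) : Prop :=
  forall eps : R, 0 < eps -> exists2 delta : R, 0 < delta &
    forall g : X -> X, homeo g -> dC0_le f g delta ->
    exists H : X -> set X,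
      [/\ usc setT H, compact_valued setT H, borel (Dom setT H),
          mu (~` Dom setT H) = 0%E &
          [/\ (forall x, mu (H x) = 0%E),
               dist_Id_le setT H eps & semiconj setT f g H]].

Definition Ts_conds (f : X -> X) (mu : set X -> \bar R) (x : X)
    (eps delta : R) (g : X -> X) (H : X -> set X) : Prop :=
  let Z := closure (orbit g x) in
  [/\ usc Z H, compact_valued Z H, borel (Dom Z H) &
      [/\ (forall z, oball x (delta / 4) z -> Z z -> mu (H z) = 0%E),
           dist_Id_le Z H eps & semiconj Z f g H]].

Definition mu_top_stable_point (f : X -> X) (mu : set X -> \bar R) (x : X) :
    Prop :=
  forall eps : R, 0 < eps -> exists2 delta : R, 0 < delta &
    forall g : X -> X, homeo g -> dC0_le f g delta ->
    exists H : X -> set X, Ts_conds f mu x eps delta g H.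

Definition strong_mu_top_stable_point (f : X -> X) (mu : set X -> \bar R)
    (x : X) : Prop :=
  forall eps : R, 0 < eps -> exists2 delta : R, 0 < delta &
    exists B : set X, [/\ borel B, mu (~` B) = 0%E &
    forall g : X -> X, homeo g -> dC0_le f g delta ->
    exists H : X -> set X, Ts_conds f mu x eps delta g H /\
      let Z := closure (orbit g x) in
      (mu (~` Dom Z H) <= mu (~` (B `&` oball x delta `&` Z)))%E].

Definition Ts (f : X -> X) (mu : set X -> \bar R) : set X :=
  [set x | mu_top_stable_point f mu x].
Definition Sts (f : X -> X) (mu : set X -> \bar R) : set X :=
  [set x | strong_mu_top_stable_point f mu x].

Definition top_stable_point (f : X -> X) (x : X) : Prop :=
  forall eps : R, 0 < eps -> exists2 delta : R, 0 < delta &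
    forall g : X -> X, homeo g -> dC0_le f g delta ->
    let Z := closure (orbit g x) in
    exists h : X -> X, [/\ {within Z, continuous h},
      (forall z, Z z -> f (h z) = h (g z)) &
      (forall z, Z z -> dist (h z) z <= eps)].

Definition non_atomic (mu : set X -> \bar R) : Prop :=
  forall x : X, mu [set x] = 0%E.

End Defs.

Definition pushmu {R : realType} {X Y : Type} (h : X -> Y)
  (mu : set X -> \bar R) : set Y -> \bar R := fun A => mu (h @^-1` A).

From Pilot Require Import Defs.
From HB Require Import structures.
From mathcomp Require Import all_boot all_order all_algebra.
From mathcomp Require Import all_classical all_reals all_analysis.
Import Order.TTheory GRing.Theory Num.Theory.
Import numFieldNormedType.Exports.
Local Open Scope classical_set_scope.
Local Open Scope ring_scope.

(* (i) A global set-valued map for f restricts to every orbit closure Z, where its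
   domain is Z intersected with a Borel set.
   (ii) A perturbation G of h f h^-1 pulls back to the perturbation h^-1 G h of f,
   orbit closures correspond under h, and a set-valued map H for f pushes forward to
   y |-> h (H (h^-1 y)); uniform continuity of h and h^-1 on the compact spaces
   converts the epsilons and deltas.  The same argument for h^-1 gives the reverse
   inclusions.
   (iii) A continuous semiconjugacy h on an orbit closure Z gives the singleton-valued
   map z |-> {h z}: its values are null since mu is non-atomic, and it is defined on
   all of Z, so (iv) holds with B = X. *)

Section borel_sets.
Context {R : realType} {X : metricType R}.
Implicit Types A B : set X.

Lemma borel_open A : open A -> borel A.
Proof. exact: sub_sigma_algebra. Qed.

Lemma borelC A : borel A -> borel (~` A).
Proof. by move=> bA; rewrite -setTD; exact: sigma_algebraCD. Qed.

Lemma borel_closed A : closed A -> borel A.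
Proof.
by move=> cA; rewrite -[A]setCK; apply: borelC; apply: borel_open; rewrite openC.
Qed.

Lemma borel_closure A : borel (closure A).
Proof. by apply: borel_closed; exact: closed_closure. Qed.

Lemma borelU A B : borel A -> borel B -> borel (A `|` B).
Proof.
move=> bA bB; rewrite -bigcup2E; apply: sigma_algebra_bigcup => -[|[|i]] //=.
exact: sigma_algebra0.
Qed.

Lemma borelI A B : borel A -> borel B -> borel (A `&` B).
Proof.
move=> bA bB; rewrite -[_ `&` _]setCK setCI.
by apply: borelC; apply: borelU; exact: borelC.
Qed.

Lemma borel_preimage {Y : metricType R} (h : X -> Y) (A : set Y) :
  continuous h -> borel A -> borel (h @^-1` A).
Proof.
move=> ch bA.
suff : <<s @open Y >> `<=` image_set_system setT h (@borel R X).
  by move/(_ A bA); rewrite /image_set_system /= setTI.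
apply: smallest_sub; first by apply: sigma_algebra_image; exact: smallest_sigma_algebra.
move=> B oB; rewrite /image_set_system /= setTI; apply: borel_open.
by move/continuousP: ch; apply.
Qed.

Lemma borel_measure_setU mu A B : borel_measure mu -> borel A -> borel B ->
  A `&` B = set0 -> mu (A `|` B) = (mu A + mu B)%E.
Proof.
case=> mu0 _ mu_add bA bB AB0.
have bAB i : borel (bigcup2 A B i) by case: i => [|[|i]] //=; exact: sigma_algebra0.
have := mu_add _ bAB; rewrite -trivIset_bigcup2 bigcup2E => /(_ AB0) mu_lim.
suff lim_AB : (fun n => \sum_(0 <= i < n) mu (bigcup2 A B i))%E @ \oo -->
    (mu A + mu B)%E by exact: (cvg_unique (@ereal_hausdorff R) mu_lim lim_AB).
apply: cvg_near_cst; exists 2%N => // -[|[|n]] //= _.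
by rewrite !big_nat_recl //= big1 ?adde0.
Qed.

Lemma borel_measure_le mu A B : borel_measure mu -> borel A -> borel B ->
  A `<=` B -> (mu A <= mu B)%E.
Proof.
move=> mu_bm bA bB AB; have bBA : borel (B `\` A) by apply: borelI => //; exact: borelC.
rewrite -(setDUK AB) borel_measure_setU ?setDIK //.
by rewrite leeDl //; case: mu_bm => _ + _; apply.
Qed.

Lemma borel_measure_pushmu {Y : metricType R} {h : X -> Y} {mu} :
  continuous h -> borel_measure mu -> borel_measure (pushmu h mu).
Proof.
move=> ch [mu0 mu_ge0 mu_add]; split.
- by rewrite /pushmu preimage_set0.
- by move=> A bA; apply: mu_ge0; exact: borel_preimage.
- move=> F bF tF; rewrite /pushmu preimage_bigcup; apply: mu_add.
  + by move=> i; exact: borel_preimage.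
  + by move=> i j _ _ [x [Fi Fj]]; apply: tF => //; exists (h x).
Qed.

End borel_sets.

Section metric_continuity.
Context {R : realType}.

Lemma divrn_lt (c : R) n : 0 < c -> (1 < n)%N -> c / n%:R < c.
Proof.
by move=> c0 n1; rewrite ltr_pdivrMr ?ltr0n ?(ltn_trans _ n1) // ltr_pMr // ltr1n.
Qed.

Lemma oball_open {T : metricType R} (x : T) r : open (oball x r).
Proof.
rewrite openE => y xy.
rewrite /interior -metricType_numDomainType.filter_from_mdist_nbhs.
exists (r - mdist x y); first by rewrite /= subr_gt0.
move=> z yz; rewrite /oball /= (le_lt_trans (metric_triangle x y z)) //.
by rewrite -ltrBrDl.
Qed.

Context {X Y : metricType R}.

Lemma within_continuous_open {A : set X} {h : X -> Y} {z O} :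
  {within A, continuous h} -> A z -> open O -> O (h z) ->
  exists2 gam : R, 0 < gam & forall w, A w -> mdist w z < gam -> O (h w).
Proof.
move=> hc Az oO Ohz.
have := (subspace_continuousP A h).1 hc z Az O (open_nbhs_nbhs (conj oO Ohz)).
rewrite /= /within -metricType_numDomainType.filter_from_mdist_nbhs.
case=> gam gam0 Hgam.
by exists gam => // w Aw wz; apply: Hgam => //=; rewrite metric_sym.
Qed.

Lemma continuous_mdist {h : X -> Y} : continuous h -> forall x e, 0 < e ->
  exists2 d : R, 0 < d & forall y, mdist x y < d -> mdist (h x) (h y) < e.
Proof.
move=> ch x e e0; have hx : oball (h x) e (h x) by rewrite /oball /= mdistxx.
have [d d0 hd] := within_continuous_open (@continuous_subspaceT _ _ setT _ ch) I
  (oball_open _ _) hx.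
by exists d => // y xy; apply: hd => //; rewrite metric_sym.
Qed.

Lemma compact_unif_continuous {h : X -> Y} : compact [set: X] -> continuous h ->
  forall e, 0 < e ->
  exists2 d : R, 0 < d & forall a b, mdist a b < d -> mdist (h a) (h b) < e.
Proof.
move=> cX ch e e0.
pose P d a := forall b, mdist a b < d -> mdist (h a) (h b) < e.
(* Near-covering form of compactness: around each point, the moduli d < r / 2 work on a
   whole neighbourhood. *)
have : \forall d \near (0:R)^'+, [set: X] `<=` P d.
  apply: ((compact_near_coveringP _).1 cX R (0:R)^'+ P) => x _.
  have [r r0 hr] := continuous_mdist ch x _ (divr_gt0 e0 (ltr0n _ 2)).
  exists ([set a | mdist x a < r / 2], [set d | 0 < d < r / 2]).
    split=> /=; first by rewrite -metricType_numDomainType.filter_from_mdist_nbhs;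
      exists (r / 2) => //; rewrite divr_gt0.
    exists (r / 2); first by rewrite /= divr_gt0.
    move=> d /=; rewrite sub0r normrN => + -> /=.
    by apply: le_lt_trans; exact: ler_norm.
  case=> a d [/= xa /andP[_ dr]] b ab.
  have xb : mdist x b < r.
    rewrite (le_lt_trans (metric_triangle x a b)) // (splitr r) ltrD //.
    exact: lt_trans dr.
  rewrite (le_lt_trans (metric_triangle _ (h x) _)) // (splitr e) ltrD ?hr //.
  by rewrite metric_sym hr // (lt_trans xa) // divrn_lt.
case=> d /= d0 Hd; exists (d / 2); first by rewrite divr_gt0.
move=> a b; apply: (Hd (d / 2)) => //=; last by rewrite divr_gt0.
by rewrite sub0r normrN gtr0_norm ?divr_gt0 // divrn_lt.
Qed.

Lemma compact_unif_continuous_le {h : X -> Y} : compact [set: X] -> continuous h ->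
  forall e, 0 < e ->
  exists2 d : R, 0 < d & forall a b, mdist a b <= d -> mdist (h a) (h b) <= e.
Proof.
move=> cX ch e e0; have [d d0 hd] := compact_unif_continuous cX ch _ e0.
exists (d / 2) => [|a b ab]; first by rewrite divr_gt0.
by apply/ltW/hd; apply: le_lt_trans ab _; exact: divrn_lt.
Qed.

End metric_continuity.

Section set_valued_maps.
Context {R : realType} {X : metricType R}.
Implicit Types (Z : set X) (H : X -> set X).

Lemma usc_sub Z Z' H : Z `<=` Z' -> usc Z' H -> usc Z H.
Proof.
move=> ZZ' uH z [Zz Hz] O oO HO.
have [gam gam0 Hgam] := uH z (conj (ZZ' z Zz) Hz) O oO HO.
by exists gam => // w Zw; apply/Hgam/ZZ'.
Qed.

Lemma Dom_setI Z H : Dom Z H = Z `&` Dom setT H.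
Proof. by apply/seteqP; split=> z [Zz Hz]; [|case: Hz]. Qed.

Lemma usc_set1 Z (h : X -> X) :
  {within Z, continuous h} -> usc Z (fun z => [set h z]).
Proof.
move=> hc z [Zz _] O oO HO.
have [gam gam0 Hgam] := within_continuous_open hc Zz oO (HO _ erefl).
by exists gam => // w Zw wz _ ->; exact: Hgam.
Qed.

Lemma Dom_set1 Z (h : X -> X) : Dom Z (fun z => [set h z]) = Z.
Proof. by apply/seteqP; split=> [z []|z Zz]; last by split => //; exists (h z). Qed.

Lemma top_stable_measure_Ts (f : X -> X) mu :
  top_stable_measure f mu -> Ts f mu = [set: X].
Proof.
move=> f_stable; apply/seteqP; split=> // x _ eps eps0.
have [delta delta0 Hdelta] := f_stable eps eps0; exists delta => // g g_homeo fg.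
have [H [uH cH bH _ [H0 dH sH]]] := Hdelta g g_homeo fg.
exists H; split; [exact: usc_sub uH | by move=> z _; exact: cH | | split].
- by rewrite Dom_setI; apply: borelI => //; exact: borel_closure.
- by move=> z _ _; exact: H0.
- by move=> z _; exact: dH.
- by move=> z _; exact: sH.
Qed.

Lemma top_stable_point_Sts (f : X -> X) mu x : borel_measure mu -> non_atomic mu ->
  top_stable_point f x -> Sts f mu x.
Proof.
move=> mu_bm mu_na x_stable eps eps0.
have [delta delta0 Hdelta] := x_stable eps eps0; exists delta => //.
have bT : borel [set: X] by apply: borel_open; exact: openT.
exists setT; split; [exact: bT | by rewrite setCT; case: mu_bm |].
move=> g g_homeo fg; have [h [hc hg hx]] := Hdelta g g_homeo fg.
set Z := closure _; have bZ : borel Z by exact: borel_closure.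
exists (fun z => [set h z]); split; first split.
- exact: usc_set1.
- by move=> z _; exact: compact_set1.
- by rewrite Dom_set1.
- split; first by move=> z _ _; exact: mu_na.
  + by move=> z Zz _ ->; rewrite /cball /= metric_sym; exact: hx.
  + by move=> z Zz; rewrite image_set1 hg.
- rewrite /= Dom_set1; apply: borel_measure_le => //; first exact: borelC.
  + apply: borelC; apply: borelI => //; apply: borelI => //.
    by apply: borel_open; exact: oball_open.
  + by move=> w nZw [_ Zw]; exact: nZw.
Qed.

End set_valued_maps.

Lemma closure_preimage_sub {T U : topologicalType} (k : U -> T) (A : set T) :
  continuous k -> closure (k @^-1` A) `<=` k @^-1` closure A.
Proof.
move=> ck; have cl : closed (k @^-1` closure A).
  by move/continuous_closedP: ck; apply; exact: closed_closure.
rewrite [X in _ `<=` X](closure_id _).1 //.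
by apply: closureS => x /=; exact: subset_closure.
Qed.

Definition conjugate_setmap {T U : Type} (h : T -> U) (k : U -> T)
  (H : T -> set T) : U -> set U := fun y => h @` H (k y).

Section conjugation.
Context {R : realType} {X Y : metricType R} {h : X -> Y} {k : Y -> X}.
Hypotheses (hK : cancel h k) (kK : cancel k h).
Hypotheses (ch : continuous h) (ck : continuous k).

Lemma preimageK (A : set X) : h @^-1` (k @^-1` A) = A.
Proof. by apply/seteqP; split=> x /=; rewrite hK. Qed.

Lemma image_preimage_cancel (A : set X) : h @` A = k @^-1` A.
Proof.
by apply/seteqP; split=> [_ [x Ax <-]|y Aky]; [rewrite /= hK | exists (k y)].
Qed.

Lemma pushmu_preimage (mu : set X -> \bar R) (A : set X) :
  pushmu h mu (k @^-1` A) = mu A.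
Proof. by rewrite /pushmu preimageK. Qed.

Lemma closure_preimage_homeo (A : set X) :
  closure (k @^-1` A) = k @^-1` closure A.
Proof.
apply/seteqP; split; first exact: closure_preimage_sub.
move=> y /= cAky; have := closure_preimage_sub h (k @^-1` A) ch (k y).
by rewrite /= kK preimageK; apply.
Qed.

Lemma homeo_conjugate {G : Y -> Y} : homeo G -> homeo (k \o G \o h).
Proof.
case=> cG [G' [GK G'K cG']].
have cconj F : continuous F -> continuous (k \o F \o h).
  move=> cF x; apply: continuous_comp (ch x) _.
  exact: continuous_comp (cF _) (ck _).
split; first exact: cconj.
exists (k \o G' \o h); split; last exact: cconj.
- by move=> x /=; rewrite kK GK hK.
- by move=> x /=; rewrite kK G'K hK.
Qed.

Lemma iter_conjugate (G : Y -> Y) n x :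
  iter n G (h x) = h (iter n (k \o G \o h) x).
Proof. by elim: n => //= n ->; rewrite kK. Qed.

Lemma orbit_conjugate (G : Y -> Y) x :
  Defs.orbit G (h x) = k @^-1` Defs.orbit (k \o G \o h) x.
Proof.
apply/seteqP; split=> y /= [n [yE|xE]]; exists n.
- by left; rewrite yE iter_conjugate hK.
- by right; apply: (can_inj hK); rewrite -iter_conjugate kK.
- by left; rewrite -[y]kK yE iter_conjugate.
- by right; rewrite -[y]kK iter_conjugate -xE.
Qed.

Lemma closure_orbit_conjugate (G : Y -> Y) x :
  closure (Defs.orbit G (h x)) = k @^-1` closure (Defs.orbit (k \o G \o h) x).
Proof. by rewrite orbit_conjugate closure_preimage_homeo. Qed.

Lemma Dom_conjugate (Z : set X) (H : X -> set X) :
  Dom (k @^-1` Z) (conjugate_setmap h k H) = k @^-1` Dom Z H.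
Proof.
apply/seteqP; split=> y /= [Zky Hy]; split => //.
- by case: Hy => _ [x Hx _]; exists x.
- by case: Hy => x Hx; exists (h x), x.
Qed.

Lemma usc_conjugate (Z : set X) (H : X -> set X) :
  usc Z H -> usc (k @^-1` Z) (conjugate_setmap h k H).
Proof.
move=> uH y [Zky [_ [x Hx _]]] O oO HO.
have oO' : open (h @^-1` O) by move/continuousP: ch; apply.
have HO' : H (k y) `<=` h @^-1` O by move=> x' Hx'; apply: HO; exists x'.
have [gam gam0 Hgam] := uH (k y) (conj Zky (ex_intro _ x Hx)) _ oO' HO'.
have [c c0 Hc] := continuous_mdist ck y _ gam0.
exists c => // w Zkw wy _ [x' Hx' <-]; apply: (Hgam (k w)) => //.
by rewrite metric_sym; apply: Hc; rewrite metric_sym.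
Qed.

Lemma dist_Id_le_conjugate (Z : set X) (H : X -> set X) eps eps' :
  (forall a b, mdist a b <= eps' -> mdist (h a) (h b) <= eps) ->
  dist_Id_le Z H eps' -> dist_Id_le (k @^-1` Z) (conjugate_setmap h k H) eps.
Proof.
move=> h_eps dH y Zky _ [x Hx <-]; rewrite /cball /= -{1}[y]kK.
exact/h_eps/(dH _ Zky).
Qed.

Lemma semiconj_conjugate (Z : set X) (f : X -> X) (G : Y -> Y) (H : X -> set X) :
  semiconj Z f (k \o G \o h) H ->
  semiconj (k @^-1` Z) (h \o f \o k) G (conjugate_setmap h k H).
Proof.
move=> sH y Zky; have := sH _ Zky; rewrite /conjugate_setmap /= kK => <-.
by rewrite !image_comp; apply: eq_imagel => x _ /=; rewrite hK.
Qed.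

Lemma dC0_le_conjugate {f : X -> X} {G : Y -> Y} {delta delta' : R} :
  (forall a b, mdist a b <= delta -> mdist (k a) (k b) <= delta') ->
  dC0_le (h \o f \o k) G delta -> dC0_le f (k \o G \o h) delta'.
Proof.
move=> k_delta fG x; rewrite /= -{1}[f x]hK; apply: k_delta.
by have := fG (h x); rewrite /= hK.
Qed.

Hypotheses (cX : compact [set: X]) (cY : compact [set: Y]).

Lemma Ts_conds_conjugate f mu x eps eps' delta delta' G H :
  (forall a b, mdist a b <= eps' -> mdist (h a) (h b) <= eps) ->
  oball (h x) (delta / 4) `<=` k @^-1` oball x (delta' / 4) ->
  Ts_conds f mu x eps' delta' (k \o G \o h) H ->
  Ts_conds (h \o f \o k) (pushmu h mu) (h x) eps delta G (conjugate_setmap h k H).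
Proof.
move=> h_eps k_ball [uH cH bH [H0 dH sH]].
rewrite /Ts_conds closure_orbit_conjugate; split; [| | | split].
- exact: usc_conjugate uH.
- move=> y Zky; apply: continuous_compact (cH _ Zky); exact: continuous_subspaceT.
- by rewrite Dom_conjugate; exact: borel_preimage.
- move=> y xy Zky; rewrite /conjugate_setmap image_preimage_cancel.
  by rewrite pushmu_preimage; apply: H0 Zky; exact: k_ball.
- exact: dist_Id_le_conjugate h_eps dH.
- exact: semiconj_conjugate sH.
Qed.

Lemma Dom_measure_le_conjugate mu x delta delta' B (Z : set X) H :
  borel_measure mu -> borel B -> borel Z ->
  oball (h x) delta `<=` k @^-1` oball x delta' ->
  (mu (~` Dom Z H) <= mu (~` (B `&` oball x delta' `&` Z)))%E ->
  (pushmu h mu (~` Dom (k @^-1` Z) (conjugate_setmap h k H)) <=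
   pushmu h mu (~` (k @^-1` B `&` oball (h x) delta `&` k @^-1` Z)))%E.
Proof.
move=> mu_bm bB bZ k_ball H_dom.
rewrite Dom_conjugate preimage_setC pushmu_preimage.
apply: (le_trans H_dom); rewrite -pushmu_preimage.
apply: borel_measure_le; first exact: borel_measure_pushmu.
- apply: borel_preimage => //; apply: borelC; apply: borelI => //.
  by apply: borelI => //; apply: borel_open; exact: oball_open.
- apply: borelC; apply: borelI; last exact: borel_preimage.
  apply: borelI; first exact: borel_preimage.
  by apply: borel_open; exact: oball_open.
- by move=> y nU [[By /k_ball xky] Zky]; apply: nU.
Qed.

Lemma conjugate_modulus x delta' : 0 < delta' -> exists2 delta : R, 0 < delta &
  [/\ oball (h x) (delta / 4) `<=` k @^-1` oball x (delta' / 4),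
      oball (h x) delta `<=` k @^-1` oball x delta' &
      forall a b, mdist a b <= delta -> mdist (k a) (k b) <= delta'].
Proof.
move=> delta'0; have delta'40 : 0 < delta' / 4 by rewrite divr_gt0.
have [c c0 Hc] := compact_unif_continuous cY ck _ delta'40.
have k_ball r : r <= c / 2 -> oball (h x) r `<=` k @^-1` oball x (delta' / 4).
  move=> rc y hxy; rewrite /oball /= -{1}[x]hK; apply: Hc.
  by apply: lt_le_trans hxy (le_trans rc _); exact/ltW/divrn_lt.
exists (c / 2); first by rewrite divr_gt0.
split.
- by apply: k_ball; apply/ltW/divrn_lt => //; rewrite divr_gt0.
- by move=> y /(k_ball _ (lexx _)) /lt_trans; apply; exact: divrn_lt.
- move=> a b ab; apply/ltW/(lt_trans (Hc _ _ _)); last exact: divrn_lt.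
  by apply: le_lt_trans ab _; exact: divrn_lt.
Qed.

Lemma Ts_conjugate f mu x : Ts f mu x -> Ts (h \o f \o k) (pushmu h mu) (h x).
Proof.
move=> fx eps eps0.
have [eps' eps'0 h_eps] := compact_unif_continuous_le cX ch _ eps0.
have [delta' delta'0 Hdelta'] := fx eps' eps'0.
have [delta delta0 [k_ball4 _ k_delta]] := conjugate_modulus x _ delta'0.
exists delta => // G G_homeo fG.
have [H HH] := Hdelta' _ (homeo_conjugate G_homeo) (dC0_le_conjugate k_delta fG).
by exists (conjugate_setmap h k H); exact: Ts_conds_conjugate h_eps k_ball4 HH.
Qed.

Lemma Sts_conjugate f mu x : borel_measure mu ->
  Sts f mu x -> Sts (h \o f \o k) (pushmu h mu) (h x).
Proof.
move=> mu_bm fx eps eps0.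
have [eps' eps'0 h_eps] := compact_unif_continuous_le cX ch _ eps0.
have [delta' delta'0 [B [bB B0 HB]]] := fx eps' eps'0.
have [delta delta0 [k_ball4 k_ball k_delta]] := conjugate_modulus x _ delta'0.
exists delta => //; exists (k @^-1` B); split.
- exact: borel_preimage.
- by rewrite preimage_setC pushmu_preimage.
move=> G G_homeo fG.
have [H [HH H_dom]] := HB _ (homeo_conjugate G_homeo) (dC0_le_conjugate k_delta fG).
exists (conjugate_setmap h k H); split.
  exact: Ts_conds_conjugate h_eps k_ball4 HH.
rewrite /= closure_orbit_conjugate.
exact: Dom_measure_le_conjugate mu_bm bB (borel_closure _) k_ball H_dom.
Qed.

End conjugation.

Section conjugation_image.
Context {R : realType} {X Y : metricType R} {h : X -> Y} {k : Y -> X}.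
Hypotheses (hK : cancel h k) (kK : cancel k h).
Hypotheses (ch : continuous h) (ck : continuous k).
Hypotheses (cX : compact [set: X]) (cY : compact [set: Y]).

Lemma conjugateK (f : X -> X) : k \o (h \o f \o k) \o h = f.
Proof. by apply: funext => x /=; rewrite !hK. Qed.

Lemma pushmuK (mu : set X -> \bar R) : pushmu k (pushmu h mu) = mu.
Proof. by apply: funext => A; exact: pushmu_preimage hK mu A. Qed.

Lemma Ts_conjugateE f mu : Ts (h \o f \o k) (pushmu h mu) = h @` Ts f mu.
Proof.
apply/seteqP; split=> [y fy|_ [x fx <-]].
  2: exact: Ts_conjugate hK kK ch ck cX cY _ _ _ fx.
exists (k y); last by rewrite kK.
by have := Ts_conjugate kK hK ck ch cY cX _ _ _ fy; rewrite conjugateK pushmuK.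
Qed.

Lemma Sts_conjugateE f mu : borel_measure mu ->
  Sts (h \o f \o k) (pushmu h mu) = h @` Sts f mu.
Proof.
move=> mu_bm; apply/seteqP; split=> [y fy|_ [x fx <-]].
  2: exact: Sts_conjugate hK kK ch ck cX cY _ _ _ mu_bm fx.
exists (k y); last by rewrite kK.
have mu_bm' := borel_measure_pushmu ch mu_bm.
by have := Sts_conjugate kK hK ck ch cY cX _ _ _ mu_bm' fy; rewrite conjugateK pushmuK.
Qed.

End conjugation_image.

Theorem proposition3p8 (R : realType) (X : metricType R)
  (f : X -> X) (mu : set X -> \bar R) :
  compact [set: X] -> homeo f -> borel_measure mu -> (0 < mu [set: X])%E ->
  [/\ (top_stable_measure f mu -> Ts f mu = [set: X]),
      (forall (Y : metricType R) (h : X -> Y) (hinv : Y -> X),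
         compact [set: Y] -> continuous h -> continuous hinv ->
         cancel h hinv -> cancel hinv h ->
         Ts (h \o f \o hinv) (pushmu h mu) = h @` Ts f mu /\
         Sts (h \o f \o hinv) (pushmu h mu) = h @` Sts f mu) &
      (non_atomic mu -> forall x : X, top_stable_point f x -> Sts f mu x)].
Proof.
move=> cX _ mu_bm _; split.
- exact: top_stable_measure_Ts.
- move=> Y h k cY ch ck hK kK.
  by split; [exact: Ts_conjugateE | exact: Sts_conjugateE].
- by move=> mu_na x; exact: top_stable_point_Sts.
Qed.
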